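(* Let $n,q$ be positive integers and let $f_{n,q}:\mathbb{C}^3\to\mathbb{C}$ be the polynomial $f_{n,q}(x,y,z)=x-3x^{2n+1}y^{2q}+2x^{3n+1}y^{3q}+yz$. Then there exists a polynomial automorphism $P=(P_1,P_2,P_3):\mathbb{C}^3\to\mathbb{C}^3$ (a polynomial map with polynomial inverse) such that $f_{n,q}=P_1$. *)

From mathcomp Require Import all_boot all_algebra.
From mathcomp Require Import reals.
From mathcomp Require Import complex.
From mathcomp Require Import mpoly.
Import GRing.Theory.

Set Implicit Arguments.
Unset Strict Implicit.
Unset Printing Implicit Defensive.

Local Open Scope ring_scope.

Definition poly_automorphism (K : nzRingType) (m : nat)
  (P : m.-tuple {mpoly K[m]}) : Prop :=
  exists Q : m.-tuple {mpoly K[m]},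
    (forall i : 'I_m, comp_mpoly Q (tnth P i) = 'X_i) /\
    (forall i : 'I_m, comp_mpoly P (tnth Q i) = 'X_i).

Definition f_nq (K : nzRingType) (n q : nat) : {mpoly K[3]} :=
  'X_0 - 3%:R * ('X_0 ^+ (2 * n + 1) * 'X_1 ^+ (2 * q))
       + 2%:R * ('X_0 ^+ (3 * n + 1) * 'X_1 ^+ (3 * q))
       + 'X_1 * 'X_2.

From mathcomp Require Import all_boot all_algebra.
From mathcomp Require Import reals complex mpoly.
From mathcomp Require Import ring.
Local Open Scope ring_scope.
Import GRing.Theory.

(* For q > 0 we have f = x + y (z + g(x, y)) with
   g = 2 x^(3n+1) y^(3q-1) - 3 x^(2n+1) y^(2q-1).  Hence f is the first
   coordinate of the triangular map (x, y, z) |-> (x + y z', y, z') with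
   z' = z + g(x, y), for ANY g in two variables; its inverse is
   (x, y, z) |-> (x - y z, y, z - g(x - y z, y)). *)

Lemma comp_mpolyA (K : comNzRingType) (n k l : nat) (p : {mpoly K[n]})
    (lq : n.-tuple {mpoly K[k]}) (lr : k.-tuple {mpoly K[l]}) :
  (p \mPo lq) \mPo lr = p \mPo [tuple tnth lq i \mPo lr | i < n].
Proof.
rewrite [p \mPo lq]comp_mpolyE [RHS]comp_mpolyE raddf_sum /=; apply: eq_bigr => m _.
rewrite comp_mpolyZ rmorph_prod; congr (_ *: _); apply: eq_bigr => i _.
by rewrite rmorphXn tnth_map tnth_ord_tuple.
Qed.

Lemma forall_ord3 (P : 'I_3 -> Prop) : P 0 -> P 1 -> P 2%R -> forall i, P i.
Proof.
move=> P0 P1 P2 [[|[|[|//]]] lti];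
  [rewrite (_ : Ordinal _ = 0) | rewrite (_ : Ordinal _ = 1) | rewrite (_ : Ordinal _ = 2%R)];
  by [|apply: val_inj].
Qed.

Section TriangularAutomorphism.
Variable K : comNzRingType.
Variable g : {mpoly K[2]}.

Local Notation x := ('X_0 : {mpoly K[3]}).
Local Notation y := ('X_1 : {mpoly K[3]}).
Local Notation z := ('X_2 : {mpoly K[3]}).

Definition eval_xy (a b : {mpoly K[3]}) := g \mPo [tuple a; b].

Lemma comp_eval_xy (t : 3.-tuple {mpoly K[3]}) a b :
  eval_xy a b \mPo t = eval_xy (a \mPo t) (b \mPo t).
Proof.
rewrite /eval_xy comp_mpolyA; congr (g \mPo _).
by apply: eq_from_tnth => i; rewrite tnth_map tnth_ord_tuple; case: i => [[|[|//]] ?].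
Qed.

Lemma triangular_poly_automorphism :
  poly_automorphism [tuple x + y * (z + eval_xy x y); y; z + eval_xy x y].
Proof.
exists [tuple x - y * z; y; z - eval_xy (x - y * z) y].
split=> i; elim/forall_ord3: i; rewrite (tnth_nth 0) /=;
  do 2 rewrite ?(comp_eval_xy, comp_mpolyD, comp_mpolyB, comp_mpolyN, rmorphM, comp_mpolyXU) /=;
  rewrite ?addrK //; ring.
Qed.
End TriangularAutomorphism.
Arguments eval_xy {K}.

Definition f_nq_shear (K : nzRingType) (n q : nat) : {mpoly K[2]} :=
  2%:R * ('X_0 ^+ (3 * n + 1) * 'X_1 ^+ (3 * q).-1)
  - 3%:R * ('X_0 ^+ (2 * n + 1) * 'X_1 ^+ (2 * q).-1).

Lemma f_nqE (K : comNzRingType) (n q : nat) : (0 < q)%N ->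
  f_nq K n q = 'X_0 + 'X_1 * ('X_2 + eval_xy (f_nq_shear K n q) 'X_0 'X_1).
Proof.
move=> q_gt0; rewrite /eval_xy /f_nq_shear.
rewrite comp_mpolyB !rmorphM !rmorph_nat !rmorphXn /= !comp_mpolyXU /=.
have yXpred m : (0 < m)%N -> 'X_1 * 'X_1 ^+ m.-1 = 'X_1 ^+ m :> {mpoly K[3]}.
  by move=> m_gt0; rewrite -exprS prednK.
rewrite /f_nq -(yXpred (3 * q)%N) ?muln_gt0 // -(yXpred (2 * q)%N) ?muln_gt0 //.
ring.
Qed.

Theorem mainTheorem1 (R : realType) (n q : nat) (hn : (0 < n)%N) (hq : (0 < q)%N) :
  exists P : 3.-tuple {mpoly R[i][3]},
    poly_automorphism P /\ tnth P ord0 = f_nq (R[i]) n q.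
Proof.
pose g := f_nq_shear R[i] n q.
exists [tuple 'X_0 + 'X_1 * ('X_2 + eval_xy g 'X_0 'X_1); 'X_1; 'X_2 + eval_xy g 'X_0 'X_1].
split; first exact: triangular_poly_automorphism.
by rewrite f_nqE.
Qed.
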